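(* Let $R$ be a commutative ring and $M$ an $R$-module. The following are equivalent: (1) $M$ is a coherent $R$-module (finitely generated, with every finitely generated submodule finitely presented); (2) $M$ is $u$-$(R\setminus\mathfrak p)$-coherent for every prime ideal $\mathfrak p$ of $R$; (3) $M$ is $u$-$(R\setminus\mathfrak m)$-coherent for every maximal ideal $\mathfrak m$ of $R$.
   Context: For a multiplicative subset $S$ of $R$ (containing $1$, closed under products): $M$ is $S$-finite with respect to $s\in S$ if there is a finitely generated submodule $F\subseteq M$ with $sM\subseteq F$; $M$ is $u$-$S$-finitely presented with respect to $s$ if there is an exact sequence $0\to T_1\to F\to M\to T_2\to 0$ with $F$ finitely presented and $sT_1=sT_2=0$; $M$ is $u$-$S$-coherent if there is $s\in S$ such that $M$ is $S$-finite with respect to $s$ and every finitely generated submodule of $M$ is $u$-$S$-finitely presented with respect to $s$. *)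

From HB Require Import structures.
From mathcomp Require Import all_boot all_order all_algebra.
Set Implicit Arguments. Unset Strict Implicit. Unset Printing Implicit Defensive.
Import GRing.Theory.
Local Open Scope ring_scope.

Section Defs.
Variable R : comPzRingType.

Definition is_ideal (I : R -> Prop) : Prop :=
  I 0 /\ (forall a b, I a -> I b -> I (a + b)) /\ (forall r a, I a -> I (r * a)).

Definition prime_ideal (P : R -> Prop) : Prop :=
  is_ideal P /\ ~ P 1 /\ (forall a b, P (a * b) -> P a \/ P b).

Definition maximal_ideal (P : R -> Prop) : Prop :=
  is_ideal P /\ ~ P 1 /\
  (forall J : R -> Prop, is_ideal J -> (forall a, P a -> J a) ->
     (forall a, J a -> P a) \/ J 1).

Section Module.
Variable M : lmodType R.

Definition span (n : nat) (x : 'I_n -> M) : M -> Prop :=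
  fun m => exists c : 'I_n -> R, m = \sum_(i < n) c i *: x i.

Definition fg_sub (N : M -> Prop) : Prop :=
  exists (n : nat) (x : 'I_n -> M), forall m, N m <-> span x m.

End Module.

Section Module2.
Variable M : lmodType R.

Definition fin_pres_sub (N : M -> Prop) : Prop :=
  exists (n : nat) (x : 'I_n -> M),
    (forall m, N m <-> span x m) /\
    @fg_sub 'rV[R]_n (fun c : 'rV[R]_n => \sum_(i < n) c ord0 i *: x i = 0).

Definition fin_gen : Prop := fg_sub (fun _ : M => True).
Definition fin_pres : Prop := fin_pres_sub (fun _ : M => True).

End Module2.

Section Module3.
Variable M : lmodType R.

Definition coherent : Prop :=
  fin_gen M /\ forall N : M -> Prop, fg_sub N -> fin_pres_sub N.

Definition S_finite_wrt (s : R) : Prop :=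
  exists (n : nat) (x : 'I_n -> M), forall m, span x (s *: m).

(* the submodule N of M is u-S-finitely presented with respect to s:
   there is an exact sequence 0 -> T1 -> F -> N -> T2 -> 0 with F finitely
   presented and s T1 = s T2 = 0; i.e. a linear map f : F -> N with
   T1 = ker f and T2 = N / im f. *)
Definition uS_fin_pres_sub_wrt (s : R) (N : M -> Prop) : Prop :=
  exists (F : lmodType R) (f : {linear F -> M}),
    fin_pres F /\
    (forall z, N (f z)) /\
    (forall z, f z = 0 -> s *: z = 0) /\
    (forall y, N y -> exists z, f z = s *: y).

Definition uS_coherent (S : R -> Prop) : Prop :=
  exists s, S s /\ S_finite_wrt s /\
    forall N : M -> Prop, fg_sub N -> uS_fin_pres_sub_wrt s N.

End Module3.
End Defs.

(* (1) => (2) takes s = 1 and (2) => (3) is trivial.  For (3) => (1), given a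
   set X of vectors, the scalars t such that t X lies in a finitely generated
   submodule spanned by elements of X form an ideal.  For X = M, and for X the
   syzygies of a finite generating family of a finitely generated submodule N,
   u-S-coherence at a maximal ideal m provides an element of this ideal outside
   m: the witness s itself for M, and s^2 for the syzygies, obtained by lifting
   the presentation of the u-S-finitely presented approximation of N.  An ideal
   contained in no maximal ideal contains 1, so M is finitely generated and N
   finitely presented. *)

From Pilot Require Import Defs.
From HB Require Import structures.
From mathcomp Require Import all_boot all_order all_algebra.
From mathcomp Require Import boolp classical_sets.
Import Defs.
Set Implicit Arguments. Unset Strict Implicit. Unset Printing Implicit Defensive.
Import GRing.Theory.
Local Open Scope ring_scope.
Local Open Scope classical_set_scope.

Section LinearCombination.
Variable R : comPzRingType.
Implicit Types V W : lmodType R.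

Definition lincomb V n (y : 'I_n -> V) (c : 'rV[R]_n) : V :=
  \sum_(i < n) c ord0 i *: y i.

Definition syzygy V n (y : 'I_n -> V) : set 'rV[R]_n := fun c => lincomb y c = 0.

Lemma lincomb_is_linear V n (y : 'I_n -> V) : linear (lincomb y).
Proof.
move=> a u v; rewrite /lincomb scaler_sumr -big_split /=.
by apply: eq_bigr => i _; rewrite !mxE scalerDl scalerA.
Qed.

HB.instance Definition _ V n (y : 'I_n -> V) :=
  GRing.isSemilinear.Build R 'rV[R]_n V _ (lincomb y)
    (GRing.semilinear_linear (lincomb_is_linear y)).

Lemma linear_lincomb V W (f : {linear V -> W}) n (y : 'I_n -> V) c :
  f (lincomb y c) = lincomb (f \o y) c.
Proof. by rewrite /lincomb linear_sum; apply: eq_bigr => i _; rewrite linearZ. Qed.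

Lemma lincomb_delta V n (y : 'I_n -> V) i : lincomb y (delta_mx 0 i) = y i.
Proof.
rewrite /lincomb (bigD1 i) //= big1 => [|j nji]; first by rewrite mxE !eqxx scale1r addr0.
by rewrite mxE (negbTE nji) andbF scale0r.
Qed.

Lemma lincomb_mulmx V n k (y : 'I_n -> V) (v : 'rV_k) (A : 'M_(k, n)) :
  lincomb y (v *m A) = lincomb (fun j => lincomb y (row j A)) v.
Proof.
rewrite /lincomb; under eq_bigr do rewrite mxE scaler_suml.
rewrite exchange_big; apply: eq_bigr => j _; rewrite scaler_sumr.
by apply: eq_bigr => i _; rewrite !mxE scalerA.
Qed.

Lemma spanP V n (y : 'I_n -> V) u : span y u <-> exists c, u = lincomb y c.
Proof.
split=> [[c ->]|[c ->]]; last by exists (fun i => c ord0 i).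
by exists (\row_i c i); apply: eq_bigr => i _; rewrite mxE.
Qed.

Lemma span_gen V n (y : 'I_n -> V) i : span y (y i).
Proof. by apply/spanP; exists (delta_mx 0 i); rewrite lincomb_delta. Qed.

Lemma span_lincomb V n (y : 'I_n -> V) c : span y (lincomb y c).
Proof. by apply/spanP; exists c. Qed.

Lemma span0 V n (y : 'I_n -> V) : span y 0.
Proof. by rewrite -(linear0 (lincomb y)); apply: span_lincomb. Qed.

Lemma spanD V n (y : 'I_n -> V) u v : span y u -> span y v -> span y (u + v).
Proof. by move=> /spanP[c ->] /spanP[d ->]; rewrite -linearD; apply: span_lincomb. Qed.

Lemma spanZ V n (y : 'I_n -> V) a u : span y u -> span y (a *: u).
Proof. by move=> /spanP[c ->]; rewrite -linearZ; apply: span_lincomb. Qed.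

Lemma span_linear V W (f : {linear V -> W}) n (y : 'I_n -> V) u :
  span y u -> span (f \o y) (f u).
Proof. by move=> /spanP[c ->]; rewrite linear_lincomb; apply: span_lincomb. Qed.

Lemma syzygy_span V n (y : 'I_n -> V) k (g : 'I_k -> 'rV_n) c :
  (forall i, syzygy y (g i)) -> span g c -> syzygy y c.
Proof.
move=> syz_g /(span_linear (lincomb y)) /spanP[d]; rewrite /syzygy => ->.
by rewrite /lincomb big1 // => i _; rewrite /= syz_g scaler0.
Qed.

Definition catf (T : Type) m n (f : 'I_m -> T) (g : 'I_n -> T) (q : 'I_(m + n)) : T :=
  match split q with inl i => f i | inr j => g j end.

Lemma catf_all (T : Type) (P : T -> Prop) m n (f : 'I_m -> T) (g : 'I_n -> T) :
  (forall i, P (f i)) -> (forall j, P (g j)) -> forall q, P (catf f g q).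
Proof. by move=> Pf Pg q; rewrite /catf; case: (split q). Qed.

Lemma span_catf V m n (f : 'I_m -> V) (g : 'I_n -> V) u v :
  span f u -> span g v -> span (catf f g) (u + v).
Proof.
move=> [c ->] [d ->]; exists (catf c d); rewrite big_split_ord /catf.
by congr (_ + _); apply: eq_bigr => i _; rewrite ?(unsplitK (inl _)) ?(unsplitK (inr _)).
Qed.

End LinearCombination.

Section Ideals.
Variable R : comPzRingType.
Implicit Types I J : set R.

Lemma maximal_ideal_prime I : maximal_ideal I -> prime_ideal I.
Proof.
move=> [[I0 [ID IM]] [nI1 Imax]]; split; first by split.
split=> // a b Iab; have [|nIa] := pselect (I a); [by left|right].
pose J c := exists p r, I p /\ c = p + r * a.
have J_ideal : is_ideal J.
  split; [by exists 0, 0; rewrite mul0r addr0|split].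
  - move=> _ _ [p [r [Ip ->]]] [p' [r' [Ip' ->]]]; exists (p + p'), (r + r').
    by split; [exact: ID|rewrite mulrDl addrACA].
  - move=> c _ [p [r [Ip ->]]]; exists (c * p), (c * r).
    by split; [exact: IM|rewrite mulrDr mulrA].
have IJ c : I c -> J c by move=> Ic; exists c, 0; rewrite mul0r addr0.
have [JI|[p [r [Ip E]]]] := Imax J J_ideal IJ.
  by case: nIa; apply: JI; exists 0, 1; rewrite add0r mul1r.
(* 1 = p + r a, hence b = b p + r (a b). *)
have -> : b = b * p + r * (a * b).
  by rewrite -{1}(mulr1 b) E mulrDr mulrCA (mulrC b a).
by apply: ID; apply: IM.
Qed.

Lemma ideal_sub_maximal I : is_ideal I -> ~ I 1 ->
  exists2 m, maximal_ideal m & I `<=` m.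
Proof.
move=> I_ideal nI1.
pose proper_over J := is_ideal J /\ I `<=` J /\ ~ J 1.
(* The empty set stands in for the union of the empty chain. *)
have [A [[A0|[A_ideal [IA nA1]]] Amax]] :
    exists A, (A = set0 \/ proper_over A) /\
              forall B, A `<` B -> ~ (B = set0 \/ proper_over B).
- apply: Zorn_bigcup => F FP Ftot.
  have Fproper J c : F J -> J c -> proper_over J.
    by move=> FJ Jc; case: (FP J FJ) => // J0; rewrite J0 in Jc.
  have [[J0 FJ0 J00]|F0] := pselect (exists2 J, F J & J 0); last first.
    left; apply/seteqP; split=> // c [J FJ Jc]; apply: F0; exists J => //.
    by case: (Fproper J c FJ Jc) => -[].
  right; split; [split; [by exists J0|split]|split].
  + move=> a b [J1 FJ1 J1a] [J2 FJ2 J2b].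
    have [[_ [D1 _]] _] := Fproper J1 a FJ1 J1a.
    have [[_ [D2 _]] _] := Fproper J2 b FJ2 J2b.
    have [J12|J21] := Ftot J1 J2 FJ1 FJ2.
      by exists J2 => //; apply: D2 => //; apply: J12.
    by exists J1 => //; apply: D1 => //; apply: J21.
  + move=> r a [J FJ Ja]; have [[_ [_ M]] _] := Fproper J a FJ Ja.
    by exists J => //; apply: M.
  + by move=> c Ic; exists J0 => //; apply: (Fproper J0 0 FJ0 J00).2.1.
  + by move=> [J FJ J1]; apply: (Fproper J 1 FJ J1).2.2.
- exfalso; apply: (Amax I); last by right; split=> //; split.
  by rewrite A0; split=> // sub; case: I_ideal => I0 _; apply: sub I0.
- exists A => //; split=> //; split=> // J J_ideal AJ.
  have [|nJ1] := pselect (J 1); [by right|left].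
  move=> c Jc; apply: contrapT => nAc; apply: (Amax J); first by split=> // /(_ c Jc).
  by right; split=> //; split=> // d /IA /AJ.
Qed.

Lemma ideal_local_eq1 I : is_ideal I ->
  (forall m, maximal_ideal m -> exists2 t, ~ m t & I t) -> I 1.
Proof.
move=> I_ideal I_loc; apply: contrapT => nI1.
have [m m_max Im] := ideal_sub_maximal I_ideal nI1.
by have [t nmt It] := I_loc m m_max; apply: nmt; apply: Im.
Qed.

End Ideals.

Section FgMultiplier.
Variables (R : comPzRingType) (V : lmodType R) (X : set V).

Definition fg_multiplier (t : R) : Prop :=
  exists k (g : 'I_k -> V), (forall i, X (g i)) /\ forall c, X c -> span g (t *: c).

Lemma fg_multiplier_ideal : is_ideal fg_multiplier.
Proof.
split; [|split].
- exists 0%N, (fun _ => 0); split=> [[]//|c _].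
  by exists (fun _ => 0); rewrite scale0r big_ord0.
- move=> a b [k1 [g1 [Xg1 sp1]]] [k2 [g2 [Xg2 sp2]]].
  exists (k1 + k2)%N, (catf g1 g2); split; first exact: catf_all.
  by move=> c Xc; rewrite scalerDl; apply: span_catf; [apply: sp1|apply: sp2].
- move=> r a [k [g [Xg sp]]]; exists k, g; split=> // c Xc.
  by rewrite -scalerA; apply: spanZ; apply: sp.
Qed.

Lemma fg_multiplier_local :
  (forall m, maximal_ideal m -> exists2 t, ~ m t & fg_multiplier t) ->
  exists k (g : 'I_k -> V), (forall i, X (g i)) /\ forall c, X c -> span g c.
Proof.
move=> /(ideal_local_eq1 fg_multiplier_ideal) [k [g [Xg sp]]].
by exists k, g; split=> // c /sp; rewrite scale1r.
Qed.

End FgMultiplier.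

Section LocalSyzygy.
Variables (R : comPzRingType) (M : lmodType R) (n : nat) (y : 'I_n -> M) (s : R).
Variables (F : lmodType R) (f : {linear F -> M}).
Hypotheses (F_pres : fin_pres F) (f_in : forall z, span y (f z))
  (f_ker : forall z, f z = 0 -> s *: z = 0)
  (f_coker : forall u, span y u -> exists z, f z = s *: u).

Lemma syzygy_fg_multiplier : fg_multiplier (syzygy y) (s * s).
Proof.
have [kz [z [z_gen [kl [l l_gen]]]]] := F_pres.
have [A fzA] : exists A : 'M_(kz, n), forall j, f (z j) = lincomb y (row j A).
  have /fin_all_exists[a fza] j : exists a, f (z j) = lincomb y a by apply/spanP; apply: f_in.
  by exists (\matrix_j a j) => j; rewrite rowK.
have /fin_all_exists[b fzb] i : exists c, f (lincomb z c) = s *: y i.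
  have [w fw] := f_coker (span_gen y i).
  by have /spanP[c cw] := (z_gen w).1 I; exists c; rewrite -cw.
have lift v : lincomb y (v *m A) = f (lincomb z v).
  rewrite lincomb_mulmx linear_lincomb; congr lincomb.
  by apply: funext => j; rewrite /= fzA.
(* [s e_i - b_i A] and [l_j A] generate the syzygies up to [s * s]. *)
pose g1 i := s *: delta_mx 0 i - b i *m A.
pose g2 j := l j *m A.
have g1_lincomb w : lincomb g1 w = s *: w - lincomb b w *m A.
  rewrite /lincomb mulmx_suml [X in s *: X]row_sum_delta scaler_sumr -sumrB.
  by apply: eq_bigr => i _; rewrite scalerBr !scalerA mulrC scalemxAl.
exists (n + kl)%N, (catf g1 g2); split.
  apply: catf_all => [i|j]; rewrite /syzygy /g1 /g2 ?linearB ?linearZ /= lift.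
    by rewrite lincomb_delta fzb subrr.
  by rewrite (_ : lincomb z (l j) = 0) ?linear0 //; apply/l_gen/span_gen.
move=> c c_syz; pose v := lincomb b c.
have sv_syz : syzygy z (s *: v).
  rewrite /syzygy linearZ; apply: f_ker.
  transitivity (s *: lincomb y c); last by rewrite c_syz scaler0.
  rewrite /= [lincomb z v]linear_lincomb linear_lincomb /lincomb scaler_sumr.
  by apply: eq_bigr => i _; rewrite /= fzb scalerA mulrC -scalerA.
have -> : (s * s) *: c = lincomb g1 (s *: c) + (s *: v) *m A.
  by rewrite g1_lincomb [lincomb b _]linearZ /= scalerA subrK.
apply: span_catf; first exact: span_lincomb.
exact: (span_linear (mulmxr A)) ((l_gen _).1 sv_syz).
Qed.

End LocalSyzygy.

Section SpannedSubmodule.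
Variables (R : comPzRingType) (M : lmodType R) (n : nat) (x : 'I_n -> M).

Definition span_pred : pred M := fun u => `[< span x u >].

Lemma span_pred_closed : subsemimod_closed span_pred.
Proof.
split; [split|].
- exact/asboolP/span0.
- by move=> u v /asboolP xu /asboolP xv; apply/asboolP/spanD.
- by move=> a u /asboolP xu; apply/asboolP/spanZ.
Qed.

Inductive spanned : predArgType := Spanned u & u \in span_pred.
Definition spanned_val w : M := let: Spanned u _ := w in u.
HB.instance Definition _ := [isSub of spanned for spanned_val].
HB.instance Definition _ := [Choice of spanned by <:].
HB.instance Definition _ :=
  GRing.SubChoice_isSubLmodule.Build R M span_pred spanned span_pred_closed.

Lemma spanned_val_is_linear : linear spanned_val. Proof. by []. Qed.
HB.instance Definition _ := GRing.isSemilinear.Build R spanned M _ spanned_val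
  (GRing.semilinear_linear spanned_val_is_linear).

Lemma spanned_fin_pres : fg_sub (syzygy x) -> fin_pres spanned.
Proof.
move=> [k [g g_gen]].
have x_in i : x i \in span_pred by apply/asboolP/span_gen.
pose z i := Spanned (x_in i).
have val_z c : spanned_val (lincomb z c) = lincomb x c.
  exact: (linear_lincomb spanned_val).
exists n, z; split.
  move=> [u xu]; split=> // _; have /asboolP/spanP[c cu] := xu.
  apply/spanP; exists c.
  by apply: val_inj; rewrite /= cu val_z.
exists k, g => c; rewrite -g_gen.
change (lincomb z c = 0 <-> lincomb x c = 0); rewrite -val_z.
by split=> [->|zc0] //; apply: val_inj.
Qed.

End SpannedSubmodule.

Section Coherence.
Variables (R : comPzRingType) (M : lmodType R).

Lemma fin_pres_sub_uS1 (N : set M) : fin_pres_sub N -> uS_fin_pres_sub_wrt 1 N.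
Proof.
move=> [n [x [Nx x_pres]]].
exists (spanned x), (spanned_val (x := x) : {linear spanned x -> M}); split.
  exact: spanned_fin_pres x_pres.
split; [|split].
- by move=> [u xu]; apply/Nx/asboolP.
- by move=> w w0; rewrite scale1r; apply: val_inj.
- move=> u /Nx/asboolP xu; exists (Spanned xu); by rewrite scale1r.
Qed.

Lemma fin_gen_local :
  (forall m, maximal_ideal m -> exists2 s, ~ m s & S_finite_wrt M s) -> fin_gen M.
Proof.
move=> M_loc; have [|k [g [_ g_gen]]] := fg_multiplier_local (X := @setT M).
  move=> m /M_loc[s ms [k [g g_gen]]]; exists s => //.
  by exists k, g; split=> // u _; apply: g_gen.
by exists k, g => u; split=> // _; apply: g_gen.
Qed.

Lemma fin_pres_sub_local (N : set M) n (y : 'I_n -> M) : (forall u, N u <-> span y u) ->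
  (forall m, maximal_ideal m -> exists2 s, ~ m s & uS_fin_pres_sub_wrt s N) ->
  fin_pres_sub N.
Proof.
move=> Ny N_loc; exists n, y; split=> //.
have [|k [g [g_syz g_gen]]] := fg_multiplier_local (X := syzygy y).
  move=> m m_max; have [s ms [F [f [F_pres [f_in [f_ker f_coker]]]]]] := N_loc m m_max.
  exists (s * s).
    by have [_ [_ m_prime]] := maximal_ideal_prime m_max; move=> /m_prime[].
  apply: (syzygy_fg_multiplier (f := f) F_pres) => // [w|u yu]; first exact/Ny.
  by apply: f_coker; apply/Ny.
by exists k, g => c; split; [exact: g_gen|exact: syzygy_span g_syz].
Qed.

Lemma coherent_local :
  (forall m, maximal_ideal m -> uS_coherent M (fun s => ~ m s)) -> coherent M.
Proof.
move=> M_loc; split.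
  by apply: fin_gen_local => m /M_loc[s [ms [M_fin _]]]; exists s.
move=> N [n [y Ny]]; apply: (fin_pres_sub_local Ny) => m /M_loc[s [ms [_ M_pres]]].
by exists s => //; apply: M_pres; exists n, y.
Qed.

End Coherence.

Theorem proposition3p5 (R : comPzRingType) (M : lmodType R) :
  (coherent M <->
     (forall p : R -> Prop, prime_ideal p -> uS_coherent M (fun s => ~ p s)))
  /\
  ((forall p : R -> Prop, prime_ideal p -> uS_coherent M (fun s => ~ p s)) <->
     (forall m : R -> Prop, maximal_ideal m -> uS_coherent M (fun s => ~ m s))).
Proof.
have coherent_prime : coherent M ->
    forall p, prime_ideal p -> uS_coherent M (fun s => ~ p s).
  move=> [[n [x Mx]] M_pres] p [_ [np1 _]]; exists 1; split=> //; split.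
    by exists n, x => u; apply/Mx.
  by move=> N /M_pres; apply: fin_pres_sub_uS1.
have prime_maximal : (forall p, prime_ideal p -> uS_coherent M (fun s => ~ p s)) ->
    forall m, maximal_ideal m -> uS_coherent M (fun s => ~ m s).
  by move=> M_prime m /maximal_ideal_prime; apply: M_prime.
split; split.
- exact: coherent_prime.
- by move=> /prime_maximal/coherent_local.
- exact: prime_maximal.
- by move=> /coherent_local/coherent_prime.
Qed.
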